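(* Let $\beta>0$ and $\gamma>0$ be real numbers. A $2\times 2$ table $P=\begin{pmatrix} p_{00} & p_{01}\\ p_{10} & p_{11}\end{pmatrix}$ (i.e. $p_{ij}>0$ for all $i,j\in\{0,1\}$ and $p_{00}+p_{01}+p_{10}+p_{11}=1$) satisfies \[ \frac{p_{00}p_{10}}{p_{01}p_{11}}=\beta^2 \quad\text{and}\quad \frac{p_{00}p_{01}}{p_{10}p_{11}}=\gamma^2 \] if and only if there exists a real number $v$ with $0<v<\frac{1}{\beta+\gamma}$ such that \[ P=\begin{pmatrix} \frac{\beta}{\beta+\frac{1}{\gamma}}\,[1-(\beta+\gamma)v] & \gamma v\\ \beta v & \frac{1}{\beta\gamma+1}\,[1-(\beta+\gamma)v]\end{pmatrix}. \]
   Context: A $2\times 2$ table is a point of the open probability simplex $\Delta=\{(p_{ij})\in\mathbb{A}^4: \sum p_{ij}=1,\ p_{ij}>0\}$. The odds ratios are $r_{||}=\frac{p_{00}p_{10}}{p_{01}p_{11}}$ and $r_==\frac{p_{00}p_{01}}{p_{10}p_{11}}$, written as $r_{||}=\beta^2$, $r_==\gamma^2$ with $\beta,\gamma>0$. *)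

From Stdlib Require Import Reals.
Open Scope R_scope.

Definition is_table (p00 p01 p10 p11 : R) : Prop :=
  0 < p00 /\ 0 < p01 /\ 0 < p10 /\ 0 < p11 /\ p00 + p01 + p10 + p11 = 1.

(* Multiplying and dividing the two odds ratios gives (p00/p11)^2 = (beta gamma)^2 and
   (p10/p01)^2 = (beta/gamma)^2, and on positive tables these are equivalent to the pair
   of odds-ratio equations.  So the table is p01 = gamma v, p10 = beta v, p00 = beta gamma w,
   p11 = w, and the constraint that the entries sum to 1 reads (beta gamma + 1) w = 1 - (beta + gamma) v;
   note beta / (beta + 1/gamma) = beta gamma / (beta gamma + 1). *)
From Stdlib Require Import Reals Lra Psatz.
Open Scope R_scope.

Lemma pow2_inj_pos (x y : R) : 0 < x -> 0 < y -> x ^ 2 = y ^ 2 -> x = y.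
Proof.
  intros hx hy e. apply Rsqr_inj; [lra | lra |].
  unfold Rsqr. simpl in e. lra.
Qed.

Lemma odds_ratios_iff (beta gamma p00 p01 p10 p11 : R) :
  0 < beta -> 0 < gamma -> 0 < p00 -> 0 < p01 -> 0 < p10 -> 0 < p11 ->
  (p00 * p10 / (p01 * p11) = beta ^ 2 /\ p00 * p01 / (p10 * p11) = gamma ^ 2)
  <-> (p00 / p11 = beta * gamma /\ p10 / p01 = beta / gamma).
Proof.
  intros hb hg h00 h01 h10 h11. split.
  - intros [e1 e2].
    assert (product : (p00 / p11) ^ 2 = (beta * gamma) ^ 2).
    { rewrite Rpow_mult_distr, <- e1, <- e2. field. lra. }
    assert (quotient : (p10 / p01) ^ 2 = (beta / gamma) ^ 2).
    { replace ((beta / gamma) ^ 2) with (beta ^ 2 / gamma ^ 2) by (field; lra).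
      rewrite <- e1, <- e2. field. lra. }
    split.
    + apply pow2_inj_pos; [apply Rdiv_lt_0_compat | apply Rmult_lt_0_compat |]; assumption.
    + apply pow2_inj_pos; [apply Rdiv_lt_0_compat .. |]; assumption.
  - intros [e0 e1].
    assert (q00 : p00 = beta * gamma * p11) by (rewrite <- e0; field; lra).
    assert (q10 : p10 = beta / gamma * p01) by (rewrite <- e1; field; lra).
    rewrite q00, q10. split; field; lra.
Qed.

Lemma table_parametrization (beta gamma p00 p01 p10 p11 : R) :
  0 < beta -> 0 < gamma -> is_table p00 p01 p10 p11 ->
  (p00 / p11 = beta * gamma /\ p10 / p01 = beta / gamma)
  <-> (exists v : R, 0 < v /\ v < 1 / (beta + gamma) /\
         p00 = beta / (beta + 1 / gamma) * (1 - (beta + gamma) * v) /\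
         p01 = gamma * v /\
         p10 = beta * v /\
         p11 = 1 / (beta * gamma + 1) * (1 - (beta + gamma) * v)).
Proof.
  intros hb hg (h00 & h01 & h10 & h11 & hsum).
  assert (hbg : 0 < beta * gamma) by nra.
  split.
  - intros [e0 e1].
    assert (q00 : p00 = beta * gamma * p11) by (rewrite <- e0; field; lra).
    assert (q10 : p10 = beta / gamma * p01) by (rewrite <- e1; field; lra).
    assert (rest : 1 - (beta + gamma) * (p01 / gamma) = (beta * gamma + 1) * p11).
    { replace ((beta + gamma) * (p01 / gamma)) with (p10 + p01) by (rewrite q10; field; lra).
      lra. }
    exists (p01 / gamma).
    repeat split.
    + apply Rdiv_lt_0_compat; lra.
    + apply (Rmult_lt_reg_l (beta + gamma)); [lra |].
      replace ((beta + gamma) * (1 / (beta + gamma))) with 1 by (field; lra). nra.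
    + rewrite rest, q00. field. lra.
    + field. lra.
    + rewrite q10. field. lra.
    + rewrite rest. field. lra.
  - intros (v & hv & _ & e00 & e01 & e10 & e11).
    rewrite e00, e01, e10, e11.
    split; field; repeat split; nra.
Qed.

Theorem proposition2p3 (beta gamma : R) (hb : 0 < beta) (hg : 0 < gamma)
  (p00 p01 p10 p11 : R) (hP : is_table p00 p01 p10 p11) :
  (p00 * p10 / (p01 * p11) = beta ^ 2 /\ p00 * p01 / (p10 * p11) = gamma ^ 2)
  <->
  (exists v : R, 0 < v /\ v < 1 / (beta + gamma) /\
     p00 = beta / (beta + 1 / gamma) * (1 - (beta + gamma) * v) /\
     p01 = gamma * v /\
     p10 = beta * v /\
     p11 = 1 / (beta * gamma + 1) * (1 - (beta + gamma) * v)).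
Proof.
  pose proof hP as (h00 & h01 & h10 & h11 & _).
  rewrite odds_ratios_iff by assumption.
  exact (table_parametrization _ _ _ _ _ _ hb hg hP).
Qed.
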